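(* Let $Y\colon\mathbb V^N\times\mathbb G^N\to\mathbb R^N$ be a component balanced allocation rule on the class of network games. Then its standard extension $\Psi^Y$ is component balanced, i.e., for every $(v,\rho)\in\mathbb V^N\times\mathbb P^N$ with $v$ component additive and every component $h\in C(g(\rho))$, $\sum_{i\in N(h)}\Psi^Y_i(v,\rho)=\sum_{g\in\mathbb G(\rho)}\rho(g)\cdot v(g\cap h)$.
   Context: $N=\{1,\dots,n\}$ is a finite player set. A link is an unordered pair $ij$ of distinct players; $g_N$ is the set of all links; a network is any $g\subseteq g_N$; $\mathbb G^N$ is the set of all networks. For a network $g$, $N(g)$ is the set of players with at least one link in $g$ and $N_0(g)=N\setminus N(g)$. A component of $g$ is a nonempty subnetwork $h\subseteq g$ that is connected (any two players of $N(h)$ are joined by a path in $h$) and maximal (if $i\in N(h)$ and $ij\in g$ then $ij\in h$); $C(g)$ is the set of components of $g$. A network game is $v\colon\mathbb G^N\to\mathbb R$ with $v(\varnothing)=0$; $\mathbb V^N$ is the set of these; $v$ is component additive if $v(g)=\sum_{h\in C(g)}v(h)$ for all $g$. A network formation probability distribution is $\rho\colon\mathbb G^N\to[0,1]$ with $\sum_g\rho(g)=1$; $\mathbb P^N$ is the set of these; $\mathbb G(\rho)=\{g:\rho(g)>0\}$ and the extent is $g(\rho)=\bigcup_{g\in\mathbb G(\rho)}g$. An allocation rule on network games is a map $Y\colon\mathbb V^N\times\mathbb G^N\to\mathbb R^N$ with $Y_i(v,g)=0$ for every $i\in N_0(g)$; it is component balanced if for every component additive $v$, every network $g$ and every $h\in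 C(g)$, $\sum_{i\in N(h)}Y_i(v,g)=v(h)$. Its standard extension is $\Psi^Y(v,\rho)=\sum_{g\in\mathbb G^N}\rho(g)\,Y(v,g)$. *)

(* Players N = {1,...,n} are represented by 'I_n. *)
From mathcomp Require Import all_boot all_order all_algebra.
From mathcomp Require Import reals.
Set Implicit Arguments. Unset Strict Implicit. Unset Printing Implicit Defensive.
Import Order.TTheory GRing.Theory Num.Theory.
Local Open Scope ring_scope.

Section Networks.
Variable n : nat.

Definition link := {s : {set 'I_n} | #|s| == 2%N}.
Definition network := {set link}.

Definition players (g : network) : {set 'I_n} :=
  [set i | [exists l in g, i \in val l]].

Definition adj (g : network) : rel 'I_n :=
  fun i j => [exists l in g, val l == [set i; j]].

Definition is_component (g h : network) : bool :=
  [&& h != set0, h \subset g,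
      [forall i in players h, forall j in players h, connect (adj h) i j] &
      [forall i in players h, forall l in g, (i \in val l) ==> (l \in h)]].

Definition components (g : network) : {set network} :=
  [set h | is_component g h].
End Networks.

Section Games.
Variables (R : realType) (n : nat).

Record game := Game { gval :> network n -> R; game0 : gval set0 = 0 }.

Definition comp_additive (v : game) : Prop :=
  forall g : network n, v g = \sum_(h in components g) v h.

Definition allocation_rule (Y : game -> network n -> 'I_n -> R) : Prop :=
  forall v g i, i \notin players g -> Y v g i = 0.

Definition comp_balanced (Y : game -> network n -> 'I_n -> R) : Prop :=
  forall v : game, comp_additive v -> forall g h : network n,
    h \in components g -> \sum_(i in players h) Y v g i = v h.

Definition is_distribution (rho : network n -> R) : Prop :=
  (forall g, 0 <= rho g <= 1) /\ \sum_(g : network n) rho g = 1.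

Definition extent (rho : network n -> R) : network n :=
  \bigcup_(g : network n | 0 < rho g) g.

Definition std_ext (Y : game -> network n -> 'I_n -> R)
  (v : game) (rho : network n -> R) (i : 'I_n) : R :=
  \sum_(g : network n) rho g * Y v g i.
End Games.

From mathcomp Require Import all_boot all_order all_algebra.
From mathcomp Require Import reals.
Import Order.TTheory GRing.Theory Num.Theory.

Set Implicit Arguments.
Unset Strict Implicit.
Unset Printing Implicit Defensive.

Local Open Scope ring_scope.

(* A network g with rho g > 0 lies inside the extent, so a component h of the
   extent is closed in g: the components of g :&: h are exactly the
   components of g contained in h.  Summing the component balance of Y at g
   over them gives v (g :&: h) by component additivity, the players of h
   outside N(g) receiving 0; the claim is the rho-weighted sum of these
   identities. *)

Section Components.
Variable n : nat.
Implicit Types g h E : network n.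

Lemma adj_sym g : symmetric (adj g).
Proof.
by move=> i j; apply/existsP/existsP => -[l Hl]; exists l; rewrite setUC.
Qed.

Lemma sub_adj g1 g2 : g1 \subset g2 -> subrel (adj g1) (adj g2).
Proof.
move=> sub12 i j /existsP[l /andP[gl lE]]; apply/existsP; exists l.
by rewrite (subsetP sub12 _ gl).
Qed.

Lemma sub_connect_adj g1 g2 i j : g1 \subset g2 ->
  connect (adj g1) i j -> connect (adj g2) i j.
Proof.
by move=> sub12; apply: connect_sub => x y /(sub_adj sub12)/connect1.
Qed.

Lemma mem_players g l a : l \in g -> a \in val l -> a \in players g.
Proof. by move=> gl al; rewrite inE; apply/existsP; exists l; rewrite gl. Qed.

Lemma sub_players g1 g2 : g1 \subset g2 -> players g1 \subset players g2.
Proof.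
move=> sub12; apply/subsetP => a; rewrite inE => /existsP[l /andP[gl al]].
exact: mem_players (subsetP sub12 _ gl) al.
Qed.

Lemma link_set2 (l : link n) a b : a \in val l -> b \in val l -> a != b ->
  val l = [set b; a].
Proof.
move=> la lb neq_ab; apply/esym/eqP.
rewrite eqEcard (eqP (valP l)) cards2 eq_sym neq_ab andbT.
by apply/subsetP => x; rewrite !inE => /orP[]/eqP->.
Qed.

Lemma connect_link g (l : link n) a b : l \in g -> a \in val l ->
  b \in val l -> connect (adj g) b a.
Proof.
move=> gl la lb; have [->|neq_ab] := eqVneq a b; first exact: connect0.
apply: connect1; apply/existsP; exists l.
by rewrite gl (link_set2 la lb neq_ab) eqxx.
Qed.

Lemma component_closed g h a l : h \in components g -> a \in players h ->
  l \in g -> a \in val l -> l \in h.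
Proof.
rewrite inE => /and4P[_ _ _ /forallP closed] ha gl al.
by move: (closed a) => /implyP/(_ ha)/forallP/(_ l); rewrite gl al.
Qed.

Lemma component_connected g h a b : h \in components g ->
  a \in players h -> b \in players h -> connect (adj h) a b.
Proof.
rewrite inE => /and4P[_ _ /forallP conn _] ha hb.
by move: (conn a) => /implyP/(_ ha)/forallP/(_ b); rewrite hb.
Qed.

Lemma component_sub g h : h \in components g -> h \subset g.
Proof. by rewrite inE => /and4P[]. Qed.

Definition component_of g i : network n :=
  [set l in g | [exists j in val l, connect (adj g) i j]].

Lemma component_of_sub g i : component_of g i \subset g.
Proof. by apply/subsetP => l; rewrite inE => /andP[]. Qed.

Lemma connect_players_component_of g i a :
  a \in players (component_of g i) -> connect (adj g) i a.
Proof.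
rewrite inE => /existsP[l /andP[]].
rewrite inE => /andP[gl /existsP[j /andP[lj ij]]] la.
exact: connect_trans ij (connect_link gl la lj).
Qed.

Lemma adj_component_of g i x y :
  connect (adj g) i x -> adj g x y -> adj (component_of g i) x y.
Proof.
move=> ix /existsP[l /andP[gl /eqP lE]]; apply/existsP; exists l.
rewrite lE eqxx andbT inE gl; apply/existsP; exists x.
by rewrite lE !inE eqxx.
Qed.

Lemma path_component_of g i x p : connect (adj g) i x ->
  path (adj g) x p -> path (adj (component_of g i)) x p.
Proof.
elim: p x => [|y p IHp] x //= ix /andP[xy yp].
rewrite adj_component_of //=; apply: IHp yp.
exact: connect_trans ix (connect1 xy).
Qed.

Lemma connect_component_of g i a :
  connect (adj g) i a -> connect (adj (component_of g i)) i a.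
Proof.
case/connectP => p ip ->; apply/connectP; exists p => //.
exact: path_component_of ip.
Qed.

Lemma players_component_of g i :
  i \in players g -> i \in players (component_of g i).
Proof.
rewrite inE => /existsP[l /andP[gl il]]; apply: (mem_players _ il).
by rewrite inE gl; apply/existsP; exists i; rewrite il connect0.
Qed.

Lemma component_of_components g i :
  i \in players g -> component_of g i \in components g.
Proof.
move=> gi; have := players_component_of gi.
rewrite inE => /existsP[l0 /andP[l0i _]].
rewrite inE /is_component component_of_sub; apply/and4P; split => //.
- by apply/set0Pn; exists l0.
- apply/forallP => a; apply/implyP => ha; apply/forallP => b; apply/implyP => hb.
  have ia := connect_component_of (connect_players_component_of ha).
  have ib := connect_component_of (connect_players_component_of hb).
  by apply: connect_trans ib; rewrite (sym_connect_sym (adj_sym _)).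
- apply/forallP => a; apply/implyP => ha; apply/forallP => l; apply/implyP => gl.
  apply/implyP => al; rewrite inE gl; apply/existsP; exists a.
  by rewrite al connect_players_component_of.
Qed.

Lemma component_connect_closed g h a b : h \in components g ->
  a \in players h -> connect (adj g) a b -> b \in players h.
Proof.
move=> hg ha /connectP[p].
elim: p a ha => [|y p IHp] a ha /=; first by move=> _ ->.
case/andP=> /existsP[l /andP[gl /eqP lE]] yp bE; apply: IHp yp bE.
have hl : l \in h by apply: (component_closed hg ha gl); rewrite lE !inE eqxx.
by apply: (mem_players hl); rewrite lE !inE eqxx orbT.
Qed.

Lemma component_ofE g h i : h \in components g -> i \in players h ->
  h = component_of g i.
Proof.
move=> hg hi; apply/setP => l; rewrite inE; apply/idP/andP.
  move=> hl; split; first exact: subsetP (component_sub hg) _ hl.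
  have /card_gt0P[j jl] : (0 < #|val l|)%N by rewrite (eqP (valP l)).
  apply/existsP; exists j; rewrite jl /=.
  apply: sub_connect_adj (component_sub hg) _.
  exact: component_connected hg hi (mem_players hl jl).
case=> gl /existsP[j /andP[jl ij]]; apply: (component_closed hg _ gl jl).
exact: component_connect_closed hg hi ij.
Qed.

Lemma sub_component_of g E i : g \subset E ->
  component_of g i \subset component_of E i.
Proof.
move=> gE; apply/subsetP => l.
rewrite !inE => /andP[gl /existsP[j /andP[jl ij]]].
rewrite (subsetP gE _ gl); apply/existsP; exists j.
by rewrite jl (sub_connect_adj gE).
Qed.

Lemma components_setI E g h : g \subset E -> h \in components E ->
  components (g :&: h) = [set h' in components g | h' \subset h].
Proof.
move=> gE hE; apply/setP => h'; rewrite !inE /is_component subsetI.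
apply/idP/idP => [/and4P[-> /andP[-> h'h] -> /forallP closed]|].
  rewrite h'h andbT; apply/forallP => a; apply/implyP => ha.
  apply/forallP => l; apply/implyP => gl; apply/implyP => al.
  have hl : l \in h.
    apply: component_closed hE _ (subsetP gE _ gl) al.
    exact: subsetP (sub_players h'h) _ ha.
  by move: (closed a) => /implyP/(_ ha)/forallP/(_ l); rewrite inE gl hl al.
case/andP => /and4P[-> -> -> /forallP closed] -> /=.
apply/forallP => a; apply/implyP => ha; apply/forallP => l.
apply/implyP => /setIP[gl _].
by move: (closed a) => /implyP/(_ ha)/forallP/(_ l); rewrite gl.
Qed.

Lemma sum_players_components (V : nmodType) E g h (F : 'I_n -> V) :
  g \subset E -> h \in components E ->
  \sum_(i in players h | i \in players g) F i
  = \sum_(h' in components g | h' \subset h) \sum_(i in players h') F i.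
Proof.
move=> gE hE.
rewrite (partition_big (component_of g)
  (fun h' => (h' \in components g) && (h' \subset h))) /=; last first.
  move=> i /andP[hi gi]; rewrite component_of_components //=.
  by rewrite (component_ofE hE hi) sub_component_of.
apply: eq_bigr => h' /andP[h'g h'h]; apply: eq_bigl => i.
apply/idP/idP => [/andP[/andP[_ gi] /eqP<-]|h'i].
  exact: players_component_of.
rewrite (subsetP (sub_players h'h) _ h'i).
rewrite (subsetP (sub_players (component_sub h'g)) _ h'i) /=.
by rewrite -(component_ofE h'g h'i).
Qed.

End Components.

Lemma comp_balanced_sub (R : realType) (n : nat)
    (Y : game R n -> network n -> 'I_n -> R) (v : game R n) (E g h : network n) :
  allocation_rule Y -> comp_balanced Y -> comp_additive v ->
  g \subset E -> h \in components E ->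
  \sum_(i in players h) Y v g i = v (g :&: h).
Proof.
move=> alloc bal add gE hE.
rewrite (bigID (mem (players g))) /= [X in _ + X]big1 ?addr0; last first.
  by move=> i /andP[_ gi]; rewrite alloc.
rewrite (sum_players_components _ gE hE) add (components_setI gE hE).
by apply: eq_big => [h'|h' /andP[h'g _]]; [rewrite inE | exact: bal].
Qed.

Theorem proposition5 (R : realType) (n : nat)
  (Y : game R n -> network n -> 'I_n -> R) :
  allocation_rule Y -> comp_balanced Y ->
  forall (v : game R n) (rho : network n -> R),
    is_distribution rho -> comp_additive v ->
    forall h : network n, h \in components (extent rho) ->
      \sum_(i in players h) std_ext Y v rho i
      = \sum_(g : network n | 0 < rho g) rho g * v (g :&: h).
Proof.
move=> alloc bal v rho [rho01 _] add h hE.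
rewrite /std_ext exchange_big /= (bigID (fun g => 0 < rho g)) /=.
rewrite [X in _ + X]big1 ?addr0 => [|g rho_le0].
  apply: eq_bigr => g rho_gt0; rewrite -mulr_sumr.
  by rewrite (comp_balanced_sub alloc bal add _ hE) // (bigcup_sup g rho_gt0).
have /andP[rho_ge0 _] := rho01 g.
have -> : rho g = 0 by apply/eqP; rewrite eq_le rho_ge0 andbT leNgt.
by rewrite big1 // => i _; rewrite mul0r.
Qed.
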